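(* Let $G=(V,E)$ be a finite, simple, connected graph with $|V|\geq 3$, and let $d\in \mathrm{Der}(\mathcal{A}(G))$. If $\Gamma_3(G)=\emptyset$, i.e. $G$ has no twin class with at least three vertices, then $d=0$.
   Context: Throughout, $\mathbb{K}$ is a field of characteristic $0$. A graph $G=(V,E)$ has vertex set $V=\{1,\dots,n\}$ and is assumed finite, simple (no loops, no multiple edges) and connected. $\mathcal{N}(i)$ denotes the set of neighbors of vertex $i$, $\deg(i)=|\mathcal{N}(i)|$, and $(a_{ij})$ is the adjacency matrix ($a_{ij}=1$ if $i,j$ are adjacent, $0$ otherwise). The evolution algebra $\mathcal{A}(G)$ is the $\mathbb{K}$-algebra with basis $\{e_i: i\in V\}$ and product $e_i\cdot e_i=\sum_{k\in V}a_{ik}e_k=\sum_{k\in\mathcal{N}(i)}e_k$ and $e_i\cdot e_j=0$ for $i\neq j$. A derivation of $\mathcal{A}(G)$ is a linear map $d:\mathcal{A}(G)\to\mathcal{A}(G)$ with $d(u\cdot v)=d(u)\cdot v+u\cdot d(v)$ for all $u,v$; $\mathrm{Der}(\mathcal{A}(G))$ is the space of derivations. Two vertices $i,j$ are twins, written $i\sim_t j$, if $\mathcal{N}(i)=\mathcal{N}(j)$; this is an equivalence relation whose classes are called twin classes. $\Gamma_3(G)$ denotes the set of twin classes of $G$ having at least three vertices. *)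

From HB Require Import structures.
From mathcomp Require Import all_boot all_order all_algebra.
Set Implicit Arguments. Unset Strict Implicit. Unset Printing Implicit Defensive.
Import GRing.Theory.
Local Open Scope ring_scope.

Definition simple_graph n (e : rel 'I_n) : Prop :=
  symmetric e /\ irreflexive e.

Definition connected_graph n (e : rel 'I_n) : Prop :=
  forall i j : 'I_n, connect e i j.

(* The evolution algebra A(G): underlying space 'rV[K]_n, basis e_i = delta_i.
   Product: e_i . e_i = sum_{k} a_ik e_k, e_i . e_j = 0 (i <> j), extended
   bilinearly: (u . v)_k = sum_i u_i v_i a_ik. *)
Definition evo_mul (K : fieldType) n (e : rel 'I_n) (u v : 'rV[K]_n) : 'rV[K]_n :=
  \row_(k < n) \sum_(i < n) u 0 i * v 0 i * (e i k)%:R.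

Definition is_derivation (K : fieldType) n (e : rel 'I_n)
  (d : {linear 'rV[K]_n -> 'rV[K]_n}) : Prop :=
  forall u v, d (evo_mul e u v) = evo_mul e (d u) v + evo_mul e u (d v).

Definition twin n (e : rel 'I_n) (i j : 'I_n) : bool := [forall k, e i k == e j k].

Definition twin_class n (e : rel 'I_n) (i : 'I_n) : {set 'I_n} :=
  [set j | twin e i j].

Definition Gamma3 n (e : rel 'I_n) : {set {set 'I_n}} :=
  [set twin_class e i | i in [pred i | 3 <= #|twin_class e i|]%N].

From HB Require Import structures.
From mathcomp Require Import all_boot all_order all_algebra.
From mathcomp Require Import ring.
Set Implicit Arguments. Unset Strict Implicit. Unset Printing Implicit Defensive.
Import GRing.Theory.
Local Open Scope ring_scope.

(* Write d(e_b) = sum_a d_ab e_a.  Expanding d(e_a e_b) for a <> b gives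
   d_ba N(b) + d_ab N(a) = 0, and expanding d(e_i^2) gives
   sum_{k in N(i)} d(e_k) = 2 d_ii e_i^2.  The first identity kills d_ab whenever
   a and b are not twins.  If a and b are twins, the absence of a third twin
   leaves only d_aa, d_ab, d_ba, d_bb in the second identity at a common
   neighbour; together with d_ab + d_ba = 0 and d_aa = d_bb (a and b have the
   same neighbourhood) this forces 2 d_ab = 0.  Once d is diagonal, the second identity
   at an edge iy gives d_ii = 2 d_yy and d_yy = 2 d_ii, hence 3 d_ii = 0. *)

Lemma pchar0_mulrnI (K : fieldType) m :
  [pchar K] =i pred0 -> (0 < m)%N -> injective (fun x : K => x *+ m).
Proof.
move=> /pcharf0P hK m_gt0 x y /eqP; rewrite -subr_eq0 -mulrnBl -mulr_natr.
by rewrite mulf_eq0 hK eqn0Ngt m_gt0 orbF subr_eq0 => /eqP.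
Qed.

Lemma connected_neighbor n (e : rel 'I_n) :
  connected_graph e -> (1 < n)%N -> forall i, exists j, e i j.
Proof.
move=> hconn n_gt1 i.
have /set0Pn [j] : [set~ i] != set0.
  by rewrite -card_gt0 cardsC1 card_ord -ltnS prednK // ltnW.
rewrite !inE => ji; have /connectP [[|x p] /= hp hj] := hconn i j.
- by rewrite hj eqxx in ji.
- by case/andP: hp => hx _; exists x.
Qed.

Section Twins.

Variables (n : nat) (e : rel 'I_n).

Lemma twinP a b : reflect (forall k, e a k = e b k) (twin e a b).
Proof. by apply: (iffP forallP) => h k; [apply/eqP | rewrite h]. Qed.

Lemma twin_refl a : twin e a a.
Proof. exact/twinP. Qed.

Lemma twin_trans a b c : twin e a b -> twin e b c -> twin e a c.
Proof. by move=> /twinP ab /twinP bc; apply/twinP => k; rewrite ab bc. Qed.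

Lemma Gamma3_eq0_twin a b c : Gamma3 e = set0 ->
  twin e a b -> twin e a c -> a != b -> a != c -> b = c.
Proof.
move=> hG ab ac nab nac; apply/eqP; apply: contraT => nbc.
have : twin_class e a \in Gamma3 e.
  apply/imsetP; exists a => //; rewrite inE.
  have sub : a |: (b |: [set c]) \subset twin_class e a.
    apply/subsetP => x; rewrite !inE => /or3P [] /eqP -> //; exact: twin_refl.
  apply: leq_trans (subset_leq_card sub).
  by rewrite !cardsU1 cards1 !inE negb_or nab nac nbc.
by rewrite hG inE.
Qed.

End Twins.

Section EvolutionDerivation.

Variables (K : fieldType) (n : nat) (e : rel 'I_n).

Lemma evo_mul_deltal (u : 'rV[K]_n) i k :
  evo_mul e (delta_mx 0 i) u 0 k = u 0 i * (e i k)%:R.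
Proof.
rewrite mxE (bigD1 i) //= big1 ?addr0; first by rewrite mxE !eqxx mul1r.
by move=> l /negbTE li; rewrite mxE li mul0r !mul0r.
Qed.

Lemma evo_mul_deltar (u : 'rV[K]_n) i k :
  evo_mul e u (delta_mx 0 i) 0 k = u 0 i * (e i k)%:R.
Proof.
rewrite mxE (bigD1 i) //= big1 ?addr0; first by rewrite mxE !eqxx mulr1.
by move=> l /negbTE li; rewrite mxE li mulr0 !mul0r.
Qed.

Lemma evo_mul_delta_neq i j : i != j ->
  evo_mul e (delta_mx 0 i) (delta_mx 0 j) = 0 :> 'rV[K]_n.
Proof. by move=> /negbTE ij; apply/rowP => k; rewrite evo_mul_deltal !mxE ij mul0r. Qed.

Lemma evo_mul_delta_sq i :
  evo_mul e (delta_mx 0 i) (delta_mx 0 i)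
  = \sum_k (e i k)%:R *: (delta_mx 0 k : 'rV[K]_n).
Proof.
apply/rowP => x; rewrite evo_mul_deltal summxE mxE !eqxx mul1r.
rewrite (bigD1 x) //= big1 ?addr0; first by rewrite !mxE !eqxx mulr1.
by move=> k kx; rewrite !mxE eqxx eq_sym (negbTE kx) mulr0.
Qed.

Variables (d : {linear 'rV[K]_n -> 'rV[K]_n}).

Definition der_coef a b : K := d (delta_mx 0 b) 0 a.

Hypothesis hd : is_derivation e d.

Lemma der_coef_delta_neq a b x : a != b ->
  der_coef b a * (e b x)%:R + der_coef a b * (e a x)%:R = 0.
Proof.
move=> ab; have := congr1 (fun u : 'rV_n => u 0 x) (hd (delta_mx 0 a) (delta_mx 0 b)).
by rewrite evo_mul_delta_neq // linear0 2!mxE evo_mul_deltar evo_mul_deltal => /esym.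
Qed.

Lemma der_coef_delta_sq i m : e i m ->
  \sum_(k | e i k) der_coef m k = der_coef i i *+ 2.
Proof.
move=> im; have := congr1 (fun u : 'rV_n => u 0 m) (hd (delta_mx 0 i) (delta_mx 0 i)).
rewrite evo_mul_delta_sq linear_sum summxE mxE evo_mul_deltar evo_mul_deltal im mulr1.
rewrite mulr2n => <-; rewrite big_mkcond; apply: eq_bigr => k _.
by rewrite linearZ mxE; case: (e i k); rewrite ?mul1r ?mul0r.
Qed.

Hypotheses (hsym : symmetric e) (hnb : forall i, exists j, e i j).

Lemma der_coef_nontwin a b : a != b -> ~~ twin e a b -> der_coef a b = 0.
Proof.
move=> ab /forallPn [x]; have ba : b != a by rewrite eq_sym.
move: (der_coef_delta_neq x ba); case: (e a x); case: (e b x) => //=.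
- by rewrite mulr1 mulr0 addr0.
- rewrite mulr0 add0r mulr1 => dba _; have [y ay] := hnb a.
  by have := der_coef_delta_neq y ba; rewrite dba mul0r addr0 ay mulr1.
Qed.

Hypotheses (hK : [pchar K] =i pred0) (hG : Gamma3 e = set0).

Lemma der_coef_twin i j : i != j -> twin e i j -> der_coef i j = 0.
Proof.
move=> ij tij; have /twinP Nij := tij.
have ntw k : k != i -> k != j -> ~~ twin e i k.
  move=> ki kj; apply: contra kj => tik.
  by rewrite (Gamma3_eq0_twin hG tij tik) // eq_sym.
have off m k : m \in [:: i; j] -> k != i -> k != j -> der_coef m k = 0.
  rewrite !inE => /orP[] /eqP -> ki kj; apply: der_coef_nontwin.
  - by rewrite eq_sym.
  - exact: ntw.
  - by rewrite eq_sym.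
  - by apply: contra (ntw k ki kj); apply: twin_trans.
have [y iy] := hnb i.
have yi : e y i by rewrite hsym.
have yj : e y j by rewrite hsym -Nij.
have sum_y m : m \in [:: i; j] ->
    \sum_(k | e y k) der_coef m k = der_coef m i + der_coef m j.
  move=> mij; rewrite (bigD1 i) //= (bigD1 j) /=; last by rewrite yj eq_sym ij.
  by rewrite big1 ?addr0 // => k /andP[/andP[_ ki] kj]; apply: off.
have dii : der_coef i i = der_coef j j.
  have jy : e j y by rewrite -Nij.
  apply: (pchar0_mulrnI (m := 2) hK) => //=.
  rewrite -(der_coef_delta_sq iy) -(der_coef_delta_sq jy).
  by apply: eq_bigl => k; rewrite Nij.
have e1 := der_coef_delta_sq yi; rewrite sum_y ?inE ?eqxx // in e1.
have e2 := der_coef_delta_sq yj; rewrite sum_y ?inE ?eqxx ?orbT // in e2.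
have e3 := der_coef_delta_neq y ij; rewrite -Nij iy mulr1 mulr1 in e3.
apply: (pchar0_mulrnI (m := 2) hK) => //=; rewrite mul0rn.
have -> : der_coef i j *+ 2 = (der_coef i i + der_coef i j)
    - (der_coef j i + der_coef j j) + (der_coef j i + der_coef i j).
  by rewrite dii; ring.
by rewrite e1 e2 e3 subrr add0r.
Qed.

Lemma der_coef_offdiag a b : a != b -> der_coef a b = 0.
Proof.
move=> ab; have [tab | ntab] := boolP (twin e a b).
- exact: der_coef_twin.
- exact: der_coef_nontwin.
Qed.

Lemma der_coef_diag i : der_coef i i = 0.
Proof.
have sum_neighbors m z : e z m -> \sum_(k | e z k) der_coef m k = der_coef m m.
  move=> zm; rewrite (bigD1 m) //= big1 ?addr0 // => k /andP[_ km].
  by rewrite der_coef_offdiag // eq_sym.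
have [y iy] := hnb i; have yi : e y i by rewrite hsym.
have f1 := der_coef_delta_sq yi; rewrite sum_neighbors // in f1.
have f2 := der_coef_delta_sq iy; rewrite sum_neighbors // in f2.
have f4 : der_coef i i = der_coef i i *+ 4 by rewrite {1}f1 f2 -mulrnA.
apply: (pchar0_mulrnI (m := 3) hK) => //=; rewrite mul0rn.
have -> : der_coef i i *+ 3 = der_coef i i *+ 4 - der_coef i i by ring.
by rewrite -f4 subrr.
Qed.

Lemma derivation_eq0 u : d u = 0.
Proof.
rewrite (row_sum_delta u) linear_sum big1 // => j _; rewrite linearZ /=.
suff -> : d (delta_mx 0 j) = 0 by rewrite scaler0.
apply/rowP => i; rewrite mxE; have [-> | ij] := eqVneq i j.
- exact: der_coef_diag.
- exact: der_coef_offdiag.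
Qed.

End EvolutionDerivation.

Theorem theorem2p1 (K : fieldType) (hK : [pchar K] =i pred0)
  (n : nat) (e : rel 'I_n)
  (hsimple : simple_graph e) (hconn : connected_graph e) (hn : (3 <= n)%N)
  (d : {linear 'rV[K]_n -> 'rV[K]_n}) (hd : is_derivation e d)
  (hG : Gamma3 e = set0) :
  forall u : 'rV[K]_n, d u = 0.
Proof.
have [hsym _] := hsimple.
have hnb := connected_neighbor hconn (ltnW hn).
exact: (derivation_eq0 hd hsym hnb hK hG).
Qed.
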